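(* For every $u_0\in\mathbb{R}$ there exist $\delta>0$ and a unique function $u\in C^2([0,\delta))$ with $u(0)=u_0$, $u'(0)=0$, solving $$\frac{d}{d\theta}\left(\frac{\sin\theta\,u'}{(1+u'^2)^2}\right)=\sin\theta\,\frac{u'^2-1}{(1+u'^2)^2}\qquad\text{for }\theta\in(0,\delta).$$ Moreover $u''(0)=-\tfrac12$, $u$ is strictly concave on $[0,\delta)$, and $u(\theta)=u_0-\tfrac14\theta^2+O(\theta^4)$ as $\theta\to0$.
   Context: The displayed ODE is the Euler–Lagrange equation of $R_2[u]=\int\frac{e^{-2u}}{1+|\nabla_{\mathbb{S}^2}u|^2}\,d\Omega$ restricted to rotationally symmetric functions $u=u(\theta)$, where $\theta$ is the colatitude on $\mathbb{S}^2$ (so $\theta=0$ is the pole on the rotation axis). *)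

From Stdlib Require Import Reals.
From Coquelicot Require Import Coquelicot.
Open Scope R_scope.

Definition has_deriv_on_Ico (d : R) (f f' : R -> R) : Prop :=
  forall x, 0 <= x < d ->
    filterlim (fun h => (f (x + h) - f x) / h)
      (within (fun h => h <> 0 /\ 0 <= x + h < d) (locally 0))
      (locally (f' x)).

Definition continuous_on_Ico (d : R) (g : R -> R) : Prop :=
  forall x, 0 <= x < d ->
    filterlim g (within (fun y => 0 <= y < d) (locally x)) (locally (g x)).

Definition C2_Ico (d : R) (u u1 u2 : R -> R) : Prop :=
  has_deriv_on_Ico d u u1 /\ has_deriv_on_Ico d u1 u2 /\ continuous_on_Ico d u2.

Definition ode_on (d : R) (u1 : R -> R) : Prop :=
  forall t, 0 < t < d ->
    is_derive (fun s => sin s * u1 s / (1 + (u1 s) ^ 2) ^ 2) t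
              (sin t * ((u1 t) ^ 2 - 1) / (1 + (u1 t) ^ 2) ^ 2).

Definition is_solution (u0 d : R) (u : R -> R) : Prop :=
  exists u1 u2 : R -> R,
    C2_Ico d u u1 u2 /\ u 0 = u0 /\ u1 0 = 0 /\ ode_on d u1.

(* For p = u' the equation reads (sin θ p)' = sin θ e(p) - cos θ d(p) with e(p) = -1 + O(p^2)
   and d(p) = O(p^3), so the solutions with p(0) = 0 are the fixed points of
   p ↦ (1 / sin θ) ∫_0^θ (sin e(p) - cos d(p)).  On [0, 1/100], among the p with |p θ| <= 2θ,
   this map is a contraction of ratio 1/2; its fixed point satisfies p θ = -θ/2 + O(θ^3) and
   p' = -1/2 + O(θ^2) < 0, and u = u0 + ∫ p inherits the expansion and strict concavity.
   For uniqueness, the divergence form (sin θ h(u'))' = sin θ k(u') makes the difference of the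
   fluxes of two solutions obey a linear Gronwall inequality as long as |u'| stays small, and a
   continuation argument shows that any solution with u'(0) = 0 stays small. *)

From Stdlib Require Import Reals Lra Psatz.
From Coquelicot Require Import Coquelicot.
Open Scope R_scope.

Lemma Rabs_le_0_eq x : Rabs x <= 0 -> x = 0.
Proof. intros H. apply Rabs_eq_0. apply Rle_antisym; [exact H | apply Rabs_pos]. Qed.

Lemma pow2_le_of_Rabs_le a r : Rabs a <= r -> a ^ 2 <= r ^ 2.
Proof. intros. split_Rabs; nra. Qed.

Lemma Rabs_div_le a s b : 0 < s -> Rabs a <= b * s -> Rabs (a / s) <= b.
Proof.
  intros Hs H. rewrite Rabs_div, (Rabs_right s) by lra. apply Rle_div_l; lra.
Qed.

Lemma Rabs_sin_le s : 0 <= s -> Rabs (sin s) <= s.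
Proof.
  intros Hs. pose proof (SIN_bound s).
  destruct (Rle_lt_or_eq _ _ Hs) as [Hpos|<-]; [|rewrite sin_0, Rabs_R0; lra].
  pose proof (sin_lt_x s Hpos). pose proof PI2_3_2.
  destruct (Rle_lt_dec s PI) as [HsPI|HsPI].
  - pose proof (sin_ge_0 s Hs HsPI). rewrite Rabs_right; lra.
  - split_Rabs; lra.
Qed.

Lemma Rabs_cos_le_1 s : Rabs (cos s) <= 1.
Proof. pose proof (COS_bound s). split_Rabs; lra. Qed.

Lemma sin_ge_cubic t : 0 <= t <= 1 -> t - t ^ 3 / 6 <= sin t.
Proof.
  intros Ht. pose proof PI2_3_2 as HPI. destruct (sin_bound t 0) as [H _]; try lra.
  replace (sin_approx t (2 * 0 + 1)) with (t - t ^ 3 / 6) in H; [lra|].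
  unfold sin_approx, sin_term; simpl; field.
Qed.

Lemma cos_ge_quadratic t : 0 <= t <= 1 -> 1 - t ^ 2 / 2 <= cos t.
Proof.
  intros Ht. pose proof PI2_3_2 as HPI. destruct (cos_bound t 0) as [H _]; try lra.
  replace (cos_approx t (2 * 0 + 1)) with (1 - t ^ 2 / 2) in H; [lra|].
  unfold cos_approx, cos_term; simpl; field.
Qed.

Lemma cos_le_quartic t : 0 <= t <= 1 -> cos t <= 1 - t ^ 2 / 2 + t ^ 4 / 24.
Proof.
  intros Ht. pose proof PI2_3_2 as HPI. destruct (cos_bound t 0) as [_ H]; try lra.
  replace (cos_approx t (2 * (0 + 1))) with (1 - t ^ 2 / 2 + t ^ 4 / 24) in H; [lra|].
  unfold cos_approx, cos_term; simpl; field.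
Qed.

Lemma pow_half_lt e : 0 < e -> exists N, forall n, (N <= n)%nat -> (/2) ^ n < e.
Proof.
  intros He. destruct (pow_lt_1_zero (/2)) with (y := e) as [N HN]; [rewrite Rabs_right; lra | exact He|].
  exists N. intros n Hn. specialize (HN n Hn).
  rewrite Rabs_right in HN; [exact HN | apply Rle_ge, pow_le; lra].
Qed.

Lemma Rle_of_le_plus_pow_half a b c : 0 <= c -> (forall n, a <= b + c * (/2) ^ n) -> a <= b.
Proof.
  intros Hc H. apply Rnot_lt_le. intros Hab.
  destruct (Req_dec c 0) as [->|Hc0]; [specialize (H O); lra|].
  destruct (pow_half_lt ((a - b) / c)) as [N HN]; [apply Rdiv_lt_0_compat; lra|].
  specialize (HN N (le_n _)). specialize (H N).
  apply (Rmult_lt_compat_l c) in HN; [|lra].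
  replace (c * ((a - b) / c)) with (a - b) in HN by (field; lra). lra.
Qed.

Lemma filterlim_within_locally_R (g : R -> R) (P : R -> Prop) x l :
  filterlim g (within P (locally x)) (locally l) <->
  forall eps, 0 < eps -> exists eta, 0 < eta /\
    forall y, P y -> Rabs (y - x) < eta -> Rabs (g y - l) < eps.
Proof.
  split.
  - intros H eps He. apply filterlim_locally with (eps := mkposreal eps He) in H.
    destruct H as [eta Heta]. exists eta. split; [apply cond_pos|].
    intros y HP Hy. exact (Heta y Hy HP).
  - intros H. apply filterlim_locally. intros eps.
    destruct (H eps (cond_pos eps)) as [eta [Heta H']].
    exists (mkposreal eta Heta). intros y Hy HP. exact (H' y HP Hy).
Qed.

Lemma continuity_lipschitz (f : R -> R) K : 0 <= K ->
  (forall x y, Rabs (f x - f y) <= K * Rabs (x - y)) -> continuity f.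
Proof.
  intros HK H x e He. exists (e / (K + 1)). split; [apply Rdiv_lt_0_compat; lra|].
  intros y [_ Hy]. simpl in *. unfold R_dist in *.
  apply Rle_lt_trans with (K * (e / (K + 1))).
  - eapply Rle_trans; [apply H|]. apply Rmult_le_compat_l; lra.
  - apply Rlt_le_trans with ((K + 1) * (e / (K + 1))); [|right; field; lra].
    apply Rmult_lt_compat_r; [apply Rdiv_lt_0_compat|]; lra.
Qed.

Lemma is_derive_difference_quotient (f : R -> R) x l (P : R -> Prop) :
  is_derive f x l -> (forall h, P h -> h <> 0) ->
  filterlim (fun h => (f (x + h) - f x) / h) (within P (locally 0)) (locally l).
Proof.
  intros Hd HP. apply is_derive_Reals in Hd. apply filterlim_within_locally_R.
  intros eps He. destruct (Hd eps He) as [del Hdel].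
  exists del. split; [apply cond_pos|]. intros h Hh1 Hh2.
  apply Hdel; [exact (HP h Hh1)|]. rewrite Rminus_0_r in Hh2. exact Hh2.
Qed.

Lemma ex_RInt_continuity f a b : continuity f -> ex_RInt f a b.
Proof.
  intros H. apply (ex_RInt_continuous (V := R_CompleteNormedModule)).
  intros z _. apply continuity_pt_filterlim, H.
Qed.

Lemma is_derive_RInt_continuity f a x : continuity f -> is_derive (RInt f a) x (f x).
Proof.
  intros H. apply is_derive_RInt with (a := a).
  - exists (mkposreal 1 Rlt_0_1). intros y _. apply RInt_correct, ex_RInt_continuity, H.
  - apply continuity_pt_filterlim, H.
Qed.

Lemma continuity_RInt f a : continuity f -> continuity (RInt f a).
Proof.
  intros H x. apply derivable_continuous_pt. exists (f x).
  apply is_derive_Reals, is_derive_RInt_continuity, H.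
Qed.

Lemma RInt_plus_continuity f g a b : continuity f -> continuity g ->
  RInt (fun x => f x + g x) a b = RInt f a b + RInt g a b.
Proof.
  intros Hf Hg. exact (RInt_plus (V := R_CompleteNormedModule) f g a b
    (ex_RInt_continuity f a b Hf) (ex_RInt_continuity g a b Hg)).
Qed.

Lemma RInt_minus_continuity f g a b : continuity f -> continuity g ->
  RInt (fun x => f x - g x) a b = RInt f a b - RInt g a b.
Proof.
  intros Hf Hg. exact (RInt_minus (V := R_CompleteNormedModule) f g a b
    (ex_RInt_continuity f a b Hf) (ex_RInt_continuity g a b Hg)).
Qed.

Lemma RInt_antiderivative (F f : R -> R) a b : (forall x, is_derive F x (f x)) -> continuity f ->
  RInt f a b = F b - F a.
Proof.
  intros HF Hf. apply is_RInt_unique.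
  apply (is_RInt_derive (V := R_CompleteNormedModule) F f).
  - intros x _. apply HF.
  - intros x _. apply continuity_pt_filterlim, Hf.
Qed.

Lemma RInt_sin_0 th : RInt sin 0 th = 1 - cos th.
Proof.
  rewrite (RInt_antiderivative (fun s => - cos s)).
  - rewrite cos_0. lra.
  - intros x. auto_derive; [exact I | ring].
  - exact continuity_sin.
Qed.

Lemma has_deriv_on_Ico_continuous d f f' : has_deriv_on_Ico d f f' -> continuous_on_Ico d f.
Proof.
  intros Hd x Hx. apply filterlim_within_locally_R. intros eps He.
  destruct (proj1 (filterlim_within_locally_R _ _ _ _) (Hd x Hx) 1 Rlt_0_1) as [e1 [He1 H1]].
  set (M := Rabs (f' x) + 1).
  assert (HM : 0 < M) by (unfold M; pose proof (Rabs_pos (f' x)); lra).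
  exists (Rmin e1 (eps / M)). split; [apply Rmin_glb_lt; [exact He1 | apply Rdiv_lt_0_compat; lra]|].
  intros y Hy Hyx. pose proof (Rmin_l e1 (eps / M)). pose proof (Rmin_r e1 (eps / M)).
  destruct (Req_dec y x) as [->|Hne]; [rewrite Rminus_diag, Rabs_R0; exact He|].
  specialize (H1 (y - x)). replace (x + (y - x)) with y in H1 by ring.
  assert (Hq : Rabs ((f y - f x) / (y - x) - f' x) < 1) by (apply H1; [split; lra | rewrite Rminus_0_r; lra]).
  assert (Hslope : Rabs ((f y - f x) / (y - x)) <= M).
  { unfold M. replace ((f y - f x) / (y - x)) with ((f y - f x) / (y - x) - f' x + f' x) by ring.
    eapply Rle_trans; [apply Rabs_triang | lra]. }
  replace (f y - f x) with ((f y - f x) / (y - x) * (y - x)) by (field; lra).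
  rewrite Rabs_mult. apply Rle_lt_trans with (M * Rabs (y - x)).
  - apply Rmult_le_compat_r; [apply Rabs_pos | exact Hslope].
  - apply Rlt_le_trans with (M * (eps / M)); [apply Rmult_lt_compat_l; lra | right; field; lra].
Qed.

Lemma has_deriv_on_Ico_is_derive d f f' x :
  has_deriv_on_Ico d f f' -> 0 < x < d -> is_derive f x (f' x).
Proof.
  intros Hd Hx. apply is_derive_Reals. intros eps He.
  destruct (proj1 (filterlim_within_locally_R _ _ _ _) (Hd x ltac:(lra)) eps He) as [e1 [He1 H1]].
  assert (Hm : 0 < Rmin e1 (Rmin x (d - x))) by (repeat apply Rmin_glb_lt; lra).
  exists (mkposreal _ Hm). intros h Hh0 Hh. simpl in Hh.
  pose proof (Rmin_l e1 (Rmin x (d - x))). pose proof (Rmin_r e1 (Rmin x (d - x))).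
  pose proof (Rmin_l x (d - x)). pose proof (Rmin_r x (d - x)).
  apply H1; [split; [exact Hh0|] | rewrite Rminus_0_r]; destruct (Rabs_def2 _ _ Hh); lra.
Qed.

Lemma has_deriv_on_Ico_minus d f g f' g' :
  has_deriv_on_Ico d f f' -> has_deriv_on_Ico d g g' ->
  has_deriv_on_Ico d (fun x => f x - g x) (fun x => f' x - g' x).
Proof.
  intros Hf Hg x Hx. apply filterlim_within_locally_R. intros eps He.
  destruct (proj1 (filterlim_within_locally_R _ _ _ _) (Hf x Hx) (eps / 2)) as [a [Ha Hfa]]; [lra|].
  destruct (proj1 (filterlim_within_locally_R _ _ _ _) (Hg x Hx) (eps / 2)) as [b [Hb Hgb]]; [lra|].
  exists (Rmin a b). split; [apply Rmin_glb_lt; assumption|].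
  intros h Hh Hhab. pose proof (Rmin_l a b). pose proof (Rmin_r a b).
  specialize (Hfa h Hh ltac:(lra)). specialize (Hgb h Hh ltac:(lra)).
  replace ((f (x + h) - g (x + h) - (f x - g x)) / h - (f' x - g' x))
    with (((f (x + h) - f x) / h - f' x) - ((g (x + h) - g x) / h - g' x))
    by (field; apply (proj1 Hh)).
  eapply Rle_lt_trans; [apply Rabs_triang|]. rewrite Rabs_Ropp. lra.
Qed.

Lemma continuous_on_Ico_eq_of_eq_near d f g x :
  continuous_on_Ico d f -> continuous_on_Ico d g -> 0 <= x < d ->
  (forall eta, 0 < eta -> exists y, 0 <= y < d /\ Rabs (y - x) < eta /\ f y = g y) ->
  f x = g x.
Proof.
  intros Hf Hg Hx Hnear. apply Rminus_diag_uniq, Rabs_le_0_eq, Rnot_lt_le. intros Hpos.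
  set (e := Rabs (f x - g x) / 2).
  destruct (proj1 (filterlim_within_locally_R _ _ _ _) (Hf x Hx) e) as [a [Ha Hfa]]; [unfold e; lra|].
  destruct (proj1 (filterlim_within_locally_R _ _ _ _) (Hg x Hx) e) as [b [Hb Hgb]]; [unfold e; lra|].
  destruct (Hnear (Rmin a b)) as [y [Hy [Hyx Hfg]]]; [apply Rmin_glb_lt; assumption|].
  pose proof (Rmin_l a b). pose proof (Rmin_r a b).
  specialize (Hfa y Hy ltac:(lra)). specialize (Hgb y Hy ltac:(lra)).
  assert (Rabs (f x - g x) <= Rabs (f y - f x) + Rabs (g y - g x)).
  { replace (f x - g x) with (- (f y - f x) + (g y - g x)) by (rewrite Hfg; ring).
    eapply Rle_trans; [apply Rabs_triang | rewrite Rabs_Ropp; lra]. }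
  unfold e in *. lra.
Qed.

Lemma has_deriv_on_Ico_zero_const d w w' : 0 < d -> has_deriv_on_Ico d w w' ->
  (forall x, 0 <= x < d -> w' x = 0) -> forall x, 0 <= x < d -> w x = w 0.
Proof.
  intros Hd0 Hd Hw'.
  assert (Hmid : forall a b, 0 < a -> a < b -> b < d -> w b = w a).
  { intros a b Ha Hab Hb. destruct (MVT_gen w a b w') as [c [Hc Heq]].
    - intros y Hy. rewrite Rmin_left, Rmax_right in Hy by lra.
      apply (has_deriv_on_Ico_is_derive d); [exact Hd | lra].
    - intros y Hy. rewrite Rmin_left, Rmax_right in Hy by lra.
      apply derivable_continuous_pt. exists (w' y).
      apply is_derive_Reals, (has_deriv_on_Ico_is_derive d); [exact Hd | lra].
    - rewrite Rmin_left, Rmax_right in Hc by lra. rewrite Hw' in Heq by lra. lra. }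
  intros x Hx. destruct (Req_dec x 0) as [->|Hx0]; [reflexivity|].
  symmetry; apply (continuous_on_Ico_eq_of_eq_near d w (fun _ => w x) 0).
  - exact (has_deriv_on_Ico_continuous d w w' Hd).
  - intros y _. apply filterlim_const.
  - lra.
  - intros eta Heta. exists (Rmin (eta / 2) x).
    pose proof (Rmin_l (eta / 2) x). pose proof (Rmin_r (eta / 2) x).
    assert (0 < Rmin (eta / 2) x) by (apply Rmin_glb_lt; lra).
    split; [lra|]. split; [rewrite Rminus_0_r, Rabs_right; lra|].
    destruct (Req_dec (Rmin (eta / 2) x) x) as [->|Hne]; [reflexivity|].
    symmetry. apply Hmid; lra.
Qed.

Lemma continuity_continuous_on_Ico d g : continuity g -> continuous_on_Ico d g.
Proof.
  intros Hg x _. eapply filterlim_filter_le_1; [|apply continuity_pt_filterlim, Hg].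
  intros Q HQ. apply filter_imp with (2 := HQ). intros y HQy _. exact HQy.
Qed.

Lemma nonincreasing_of_deriv_nonpos (g g' : R -> R) a b :
  (forall s, a < s < b -> is_derive g s (g' s)) -> (forall s, a < s < b -> g' s <= 0) ->
  forall x y, a < x -> x < y -> y < b -> g y <= g x.
Proof.
  intros Hg Hg' x y Hx Hxy Hy. destruct (MVT_gen g x y g') as [c [Hc Heq]].
  - intros z Hz. rewrite Rmin_left, Rmax_right in Hz by lra. apply Hg; lra.
  - intros z Hz. rewrite Rmin_left, Rmax_right in Hz by lra.
    apply derivable_continuous_pt. eexists. apply is_derive_Reals, Hg. lra.
  - rewrite Rmin_left, Rmax_right in Hc by lra. pose proof (Hg' c ltac:(lra)). nra.
Qed.

(* The weighted energy exp(-2 K s) w(s)^2 is nonincreasing and is O(s^2) at 0+. *)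
Lemma gronwall_zero (w w' : R -> R) T K C : 0 <= K ->
  (forall s, 0 < s < T -> is_derive w s (w' s)) ->
  (forall s, 0 < s < T -> Rabs (w' s) <= K * Rabs (w s)) ->
  (forall s, 0 < s < T -> Rabs (w s) <= C * s) ->
  forall s, 0 < s < T -> w s = 0.
Proof.
  intros HK Hw Hw' HC.
  set (g := fun s => exp (- 2 * K * s) * w s ^ 2).
  set (g' := fun s => exp (- 2 * K * s) * (- 2 * K * w s ^ 2 + 2 * w s * w' s)).
  assert (Hg : forall s, 0 < s < T -> is_derive g s (g' s)).
  { intros s Hs. unfold g, g'. pose proof (Hw s Hs) as Hd.
    assert (Hex : ex_derive w s) by (eexists; exact Hd).
    apply is_derive_unique in Hd. auto_derive; [exact Hex|].
    change (Derive (fun x => w x) s) with (Derive w s). rewrite Hd. ring. }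
  assert (Hg'_nonpos : forall s, 0 < s < T -> g' s <= 0).
  { intros s Hs. unfold g'. pose proof (exp_pos (- 2 * K * s)).
    assert (2 * w s * w' s <= 2 * K * w s ^ 2).
    { pose proof (Hw' s Hs). pose proof (Rabs_pos (w s)). pose proof (Rabs_pos (w' s)).
      rewrite <- pow2_abs. assert (w s * w' s <= Rabs (w s) * Rabs (w' s)).
      { rewrite <- Rabs_mult. apply Rle_abs. }
      nra. }
    nra. }
  pose proof (nonincreasing_of_deriv_nonpos g g' 0 T Hg Hg'_nonpos) as Hmono.
  assert (Hsmall : forall a, 0 < a < T -> g a <= C ^ 2 * a ^ 2).
  { intros a Ha. unfold g.
    assert (exp (- 2 * K * a) <= 1).
    { rewrite <- exp_0. destruct (Req_dec K 0) as [->|HK0]; [right; f_equal; ring|].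
      left. apply exp_increasing. nra. }
    pose proof (exp_pos (- 2 * K * a)).
    assert (w a ^ 2 <= (C * a) ^ 2) by (apply pow2_le_of_Rabs_le, HC, Ha).
    assert (0 <= w a ^ 2) by apply pow2_ge_0. nra. }
  intros s Hs.
  assert (Hg0 : g s <= 0).
  { apply Rnot_lt_le. intros Hgs.
    set (a := Rmin (s / 2) (g s / (C ^ 2 * s + 1))).
    assert (0 <= C ^ 2) by apply pow2_ge_0.
    assert (0 < a) by (apply Rmin_glb_lt; [lra | apply Rdiv_lt_0_compat; nra]).
    assert (a <= s / 2) by apply Rmin_l.
    assert (Ha : a * (C ^ 2 * s + 1) <= g s).
    { assert (Hle : a <= g s / (C ^ 2 * s + 1)) by apply Rmin_r.
      apply Rmult_le_compat_r with (r := C ^ 2 * s + 1) in Hle; [|nra].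
      replace (g s / (C ^ 2 * s + 1) * (C ^ 2 * s + 1)) with (g s) in Hle by (field; nra). lra. }
    pose proof (Hmono a s ltac:(lra) ltac:(lra) ltac:(lra)). pose proof (Hsmall a ltac:(lra)).
    nra. }
  assert (w s ^ 2 <= 0) by (unfold g in Hg0; pose proof (exp_pos (- 2 * K * s)); nra).
  nra.
Qed.

Lemma continuation_eq d (v p : R -> R) r x :
  continuous_on_Ico d v -> continuous_on_Ico d p -> 0 <= x < d -> v 0 = p 0 ->
  (forall t, 0 <= t < d -> Rabs (p t) < r) ->
  (forall T, T <= x -> (forall s, 0 <= s < T -> Rabs (v s) <= r) ->
     forall s, 0 < s < T -> v s = p s) ->
  v x = p x.
Proof.
  intros Hv Hp Hx H0 Hpr Hloc.
  set (A := fun t => 0 <= t <= x /\ forall s, 0 <= s <= t -> Rabs (v s) <= r).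
  assert (HA0 : A 0).
  { split; [lra|]. intros s Hs. replace s with 0 by lra. rewrite H0. left. apply Hpr. lra. }
  destruct (completeness A) as [T [HTub HTlub]].
  { exists x. intros t [Ht _]. lra. }
  { exists 0. exact HA0. }
  assert (HT0 : 0 <= T) by (apply HTub; exact HA0).
  assert (HTx : T <= x) by (apply HTlub; intros t [Ht _]; lra).
  assert (Hbelow : forall s, 0 <= s < T -> Rabs (v s) <= r).
  { intros s Hs. apply Rnot_lt_le. intros Hc.
    assert (T <= s); [|lra].
    apply HTlub. intros t [Ht1 Ht2]. apply Rnot_lt_le. intros Hts. specialize (Ht2 s ltac:(lra)). lra. }
  assert (HvT : v T = p T).
  { destruct (Req_dec T 0) as [->|HT]; [exact H0|].
    apply (continuous_on_Ico_eq_of_eq_near d); [exact Hv | exact Hp | lra|].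
    intros eta Heta. set (y := T - Rmin (eta / 2) (T / 2)).
    pose proof (Rmin_l (eta / 2) (T / 2)). pose proof (Rmin_r (eta / 2) (T / 2)).
    assert (0 < Rmin (eta / 2) (T / 2)) by (apply Rmin_glb_lt; lra).
    exists y. split; [unfold y; lra|]. split; [unfold y; rewrite Rabs_left; lra|].
    apply (Hloc T); [exact HTx | exact Hbelow | unfold y; lra]. }
  assert (HTeq : T = x).
  { apply Rle_antisym; [exact HTx|]. apply Rnot_lt_le. intros HTlt.
    assert (Hgap : 0 < r - Rabs (v T)) by (rewrite HvT; pose proof (Hpr T ltac:(lra)); lra).
    destruct (proj1 (filterlim_within_locally_R _ _ _ _) (Hv T ltac:(lra)) _ Hgap) as [a [Ha Hva]].
    pose proof (Rmin_l (T + a / 2) x). pose proof (Rmin_r (T + a / 2) x).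
    set (t := Rmin (T + a / 2) x) in *.
    assert (T < t) by (apply Rmin_glb_lt; lra).
    assert (A t); [|pose proof (HTub t ltac:(assumption)); lra].
    split; [lra|]. intros s Hs. destruct (Rlt_or_le s T) as [HsT|HsT]; [apply Hbelow; lra|].
    assert (Rabs (v s - v T) < r - Rabs (v T)) by (apply Hva; [lra | rewrite Rabs_right; lra]).
    assert (Rabs (v s) <= Rabs (v s - v T) + Rabs (v T)).
    { replace (v s) with (v s - v T + v T) at 1 by ring. apply Rabs_triang. }
    lra. }
  rewrite <- HTeq. exact HvT.
Qed.

Lemma strict_decreasing_of_deriv_neg (f f' : R -> R) a b : a < b ->
  (forall x, a < x < b -> is_derive f x (f' x)) -> (forall x, a < x < b -> f' x < 0) ->
  (forall x, a <= x <= b -> continuity_pt f x) -> f b < f a.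
Proof.
  intros Hab Hd Hneg Hc.
  set (pr := fun c (P : a < c < b) =>
    exist (fun l => derivable_pt_abs f c l) (f' c) (proj1 (is_derive_Reals f c (f' c)) (Hd c P))).
  destruct (MVT f id a b pr (fun c _ => derivable_pt_id c) Hab Hc
    (fun c _ => derivable_continuous_pt id c (derivable_pt_id c))) as [c [P Heq]].
  rewrite derive_pt_id in Heq. simpl in Heq. unfold id in Heq.
  pose proof (Hneg c P). nra.
Qed.

Lemma strict_concave_of_deriv_decreasing (f f' : R -> R) d :
  (forall x, 0 <= x < d -> is_derive f x (f' x)) ->
  (forall a b, 0 <= a -> a < b -> b < d -> f' b < f' a) ->
  forall x y t, 0 <= x < d -> 0 <= y < d -> x <> y -> 0 < t < 1 ->
    t * f x + (1 - t) * f y < f (t * x + (1 - t) * y).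
Proof.
  intros Hd Hdecr.
  assert (Hmvt : forall a b, 0 <= a -> a < b -> b < d ->
             exists c, f b - f a = f' c * (b - a) /\ a < c < b).
  { intros a b Ha Hab Hb. apply MVT_cor2; [exact Hab|].
    intros c Hc. apply is_derive_Reals, Hd. lra. }
  assert (Hlt : forall x y t, 0 <= x -> x < y -> y < d -> 0 < t < 1 ->
             t * f x + (1 - t) * f y < f (t * x + (1 - t) * y)).
  { intros x y t Hx Hxy Hy Ht. set (z := t * x + (1 - t) * y).
    assert (x < z < y) by (unfold z; nra).
    destruct (Hmvt x z) as [c1 [E1 H1]]; try lra.
    destruct (Hmvt z y) as [c2 [E2 H2]]; try lra.
    pose proof (Hdecr c1 c2 ltac:(lra) ltac:(lra) ltac:(lra)).
    assert (t * (f x - f z) + (1 - t) * (f y - f z) = t * (1 - t) * (y - x) * (f' c2 - f' c1)).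
    { replace (f x - f z) with (- (f z - f x)) by ring. rewrite E1, E2. unfold z. ring. }
    assert (0 < t * (1 - t) * (y - x)) by (apply Rmult_lt_0_compat; nra).
    nra. }
  intros x y t Hx Hy Hxy Ht. destruct (Rlt_or_le x y) as [H|H].
  - apply Hlt; lra.
  - replace (t * x + (1 - t) * y) with ((1 - t) * y + (1 - (1 - t)) * x) by ring.
    replace (t * f x + (1 - t) * f y) with ((1 - t) * f y + (1 - (1 - t)) * f x) by ring.
    apply Hlt; lra.
Qed.

Section GeometricLimit.

Variables (a : nat -> R) (c : R).
Hypothesis step : forall n, Rabs (a (S n) - a n) <= c * (/ 2) ^ n.

Lemma geometric_tail_bound n k : Rabs (a (n + k) - a n) <= 2 * c * ((/ 2) ^ n - (/ 2) ^ (n + k)).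
Proof.
  induction k as [|k IH].
  - rewrite Nat.add_0_r, Rminus_diag, Rabs_R0. lra.
  - replace (n + S k)%nat with (S (n + k)) by lia.
    replace (a (S (n + k)) - a n) with ((a (S (n + k)) - a (n + k)) + (a (n + k) - a n)) by ring.
    eapply Rle_trans; [apply Rabs_triang|]. pose proof (step (n + k)).
    replace ((/ 2) ^ S (n + k)) with (/ 2 * (/ 2) ^ (n + k)) by (simpl; ring). lra.
Qed.

Lemma geometric_limit : {l | forall n, Rabs (l - a n) <= 2 * c * (/ 2) ^ n}.
Proof.
  assert (Hc : 0 <= c) by (pose proof (step 0); pose proof (Rabs_pos (a 1%nat - a 0%nat)); simpl in *; lra).
  assert (Hpos : forall m, 0 < (/ 2) ^ m) by (intros; apply pow_lt; lra).
  assert (Hcauchy : Cauchy_crit a).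
  { intros e He. destruct (pow_half_lt (e / (2 * c + 1))) as [N HN]; [apply Rdiv_lt_0_compat; lra|].
    assert (Hfar : forall i j, (N <= i)%nat -> (i <= j)%nat -> Rabs (a j - a i) < e).
    { intros i j Hi Hij. replace j with (i + (j - i))%nat by lia.
      eapply Rle_lt_trans; [apply geometric_tail_bound|].
      specialize (HN i Hi). pose proof (Hpos (i + (j - i))%nat).
      apply Rmult_lt_compat_l with (r := 2 * c + 1) in HN; [|lra].
      replace ((2 * c + 1) * (e / (2 * c + 1))) with e in HN by (field; lra). nra. }
    exists N. intros i j Hi Hj. unfold Rdist.
    destruct (Nat.le_ge_cases i j); [rewrite Rabs_minus_sym|]; apply Hfar; lia. }
  destruct (Rcomplete.R_complete a Hcauchy) as [l Hl]. exists l. intros n.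
  apply Rle_of_le_plus_pow_half with (c := 1); [lra|]. intros k.
  assert (Hk : 0 < (/ 2) ^ k) by apply Hpos.
  destruct (Hl ((/ 2) ^ k) Hk) as [N HN]. specialize (HN (n + N)%nat ltac:(lia)).
  unfold Rdist in HN. pose proof (geometric_tail_bound n N). pose proof (Hpos (n + N)%nat).
  replace (a (n + N)%nat) with (a (N + n)%nat) in * by (f_equal; lia).
  replace (l - a n) with (- (a (N + n)%nat - l) + (a (N + n)%nat - a n)) by ring.
  eapply Rle_trans; [apply Rabs_triang|]. rewrite Rabs_Ropp. nra.
Qed.

End GeometricLimit.

(** * The reduced equation as a fixed-point problem *)

Definition delta : R := / 100.

Definition clamp (x : R) : R := Rmax 0 (Rmin delta x).

Definition clamp_half (x : R) : R := Rmax (- / 2) (Rmin (/ 2) x).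

Lemma continuity_clamp : continuity clamp.
Proof.
  apply (continuity_lipschitz _ 1); [lra|]. intros x y.
  unfold clamp, delta, Rmax, Rmin. repeat destruct Rle_dec; split_Rabs; lra.
Qed.

Lemma clamp_range x : 0 <= clamp x <= delta.
Proof. unfold clamp, delta, Rmax, Rmin. repeat destruct Rle_dec; lra. Qed.

Lemma clamp_id x : 0 <= x <= delta -> clamp x = x.
Proof. unfold clamp, delta, Rmax, Rmin. repeat destruct Rle_dec; lra. Qed.

Lemma continuity_clamp_half : continuity clamp_half.
Proof.
  apply (continuity_lipschitz _ 1); [lra|]. intros x y.
  unfold clamp_half, Rmax, Rmin. repeat destruct Rle_dec; split_Rabs; lra.
Qed.

Lemma clamp_half_range x : Rabs (clamp_half x) <= / 2.
Proof. unfold clamp_half, Rmax, Rmin. repeat destruct Rle_dec; split_Rabs; lra. Qed.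

Lemma clamp_half_id x : Rabs x <= / 2 -> clamp_half x = x.
Proof. unfold clamp_half, Rmax, Rmin. repeat destruct Rle_dec; split_Rabs; lra. Qed.

(* For p = u' the ODE reads (1 - 3 p^2) sin θ p' = (1 + p^2) (sin θ (p^2 - 1) - cos θ p),
   that is (sin θ p)' = sin θ e_rat p - cos θ d_rat p.  Clamping the argument makes the
   coefficients globally continuous; below they are only evaluated at |p| <= 1/50. *)
Definition e_rat (y : R) : R := (y ^ 4 - 1) / (1 - 3 * y ^ 2).
Definition d_rat (y : R) : R := 4 * y ^ 3 / (1 - 3 * y ^ 2).
Definition e_coef (x : R) : R := e_rat (clamp_half x).
Definition d_coef (x : R) : R := d_rat (clamp_half x).

Lemma e_rat_near a : Rabs a <= / 50 -> Rabs (e_rat a + 1) <= 4 * a ^ 2.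
Proof.
  intros Ha. pose proof (pow2_le_of_Rabs_le _ _ Ha). unfold e_rat.
  replace ((a ^ 4 - 1) / (1 - 3 * a ^ 2) + 1) with (a ^ 2 * (a ^ 2 - 3) / (1 - 3 * a ^ 2))
    by (field; nra).
  apply Rabs_div_le; [nra|]. rewrite Rabs_left1 by nra. nra.
Qed.

Lemma d_rat_small a : Rabs a <= / 50 -> Rabs (d_rat a) <= 5 * Rabs a ^ 3.
Proof.
  intros Ha. pose proof (pow2_le_of_Rabs_le _ _ Ha). unfold d_rat.
  apply Rabs_div_le; [nra|]. rewrite Rabs_mult, <- RPow_abs, (Rabs_right 4) by lra.
  assert (0 <= Rabs a ^ 3) by (apply pow_le, Rabs_pos). nra.
Qed.

Lemma e_rat_lipschitz a b : Rabs a <= / 50 -> Rabs b <= / 50 ->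
  Rabs (e_rat a - e_rat b) <= / 5 * Rabs (a - b).
Proof.
  intros Ha Hb. pose proof (pow2_le_of_Rabs_le _ _ Ha). pose proof (pow2_le_of_Rabs_le _ _ Hb).
  unfold e_rat.
  replace ((a ^ 4 - 1) / (1 - 3 * a ^ 2) - (b ^ 4 - 1) / (1 - 3 * b ^ 2))
    with ((a - b) * ((a + b) * (a ^ 2 + b ^ 2 - 3 * a ^ 2 * b ^ 2 - 3)
                     / ((1 - 3 * a ^ 2) * (1 - 3 * b ^ 2)))) by (field; nra).
  rewrite Rabs_mult, Rmult_comm. apply Rmult_le_compat_r; [apply Rabs_pos|].
  assert (Rabs (a + b) <= / 25) by (split_Rabs; lra).
  apply Rabs_div_le; [nra|]. rewrite Rabs_mult.
  rewrite (Rabs_left1 (a ^ 2 + b ^ 2 - 3 * a ^ 2 * b ^ 2 - 3)) by nra.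
  assert (0 <= Rabs (a + b)) by apply Rabs_pos. nra.
Qed.

Lemma d_rat_lipschitz a b : Rabs a <= / 50 -> Rabs b <= / 50 ->
  Rabs (d_rat a - d_rat b) <= / 100 * Rabs (a - b).
Proof.
  intros Ha Hb. pose proof (pow2_le_of_Rabs_le _ _ Ha). pose proof (pow2_le_of_Rabs_le _ _ Hb).
  unfold d_rat.
  replace (4 * a ^ 3 / (1 - 3 * a ^ 2) - 4 * b ^ 3 / (1 - 3 * b ^ 2))
    with ((a - b) * (4 * (a ^ 2 + a * b + b ^ 2 - 3 * a ^ 2 * b ^ 2)
                     / ((1 - 3 * a ^ 2) * (1 - 3 * b ^ 2)))) by (field; nra).
  rewrite Rabs_mult, Rmult_comm. apply Rmult_le_compat_r; [apply Rabs_pos|].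
  apply Rabs_div_le; [nra|].
  assert (Hab : a * b <= / 2500 /\ - / 2500 <= a * b) by (split_Rabs; nra).
  assert (0 <= a ^ 2 * b ^ 2 <= / 2500 * / 2500)
    by (replace (a ^ 2 * b ^ 2) with ((a * b) * (a * b)) by ring; nra).
  assert (0 <= a ^ 2 + a * b + b ^ 2) by nra.
  rewrite Rabs_right by nra. nra.
Qed.

Lemma e_coef_small a : Rabs a <= / 50 -> e_coef a = e_rat a.
Proof. intros. unfold e_coef. rewrite clamp_half_id; [reflexivity | lra]. Qed.

Lemma d_coef_small a : Rabs a <= / 50 -> d_coef a = d_rat a.
Proof. intros. unfold d_coef. rewrite clamp_half_id; [reflexivity | lra]. Qed.

Lemma continuity_pt_rat_coef (num : R -> R) y : continuity num -> Rabs y <= / 2 ->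
  continuity_pt (fun y => num y / (1 - 3 * y ^ 2)) y.
Proof.
  intros Hnum Hy. pose proof (pow2_le_of_Rabs_le _ _ Hy).
  apply (continuity_pt_div num (fun y => 1 - 3 * y ^ 2)); [apply Hnum | | nra].
  apply continuity_pt_minus; [apply continuity_pt_const; intros u v; reflexivity|].
  apply continuity_pt_scal, derivable_continuous_pt, derivable_pt_pow.
Qed.

Lemma continuity_e_coef : continuity e_coef.
Proof.
  intros x. apply (continuity_pt_comp clamp_half e_rat); [apply continuity_clamp_half|].
  apply continuity_pt_rat_coef; [|apply clamp_half_range].
  intros y. apply continuity_pt_minus; [apply derivable_continuous_pt, derivable_pt_pow|].
  apply continuity_pt_const. intros u v; reflexivity.
Qed.

Lemma continuity_d_coef : continuity d_coef.
Proof.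
  intros x. apply (continuity_pt_comp clamp_half d_rat); [apply continuity_clamp_half|].
  apply continuity_pt_rat_coef; [|apply clamp_half_range].
  intros y. apply continuity_pt_scal, derivable_continuous_pt, derivable_pt_pow.
Qed.

Definition source (p : R -> R) (s : R) : R := sin s * e_coef (p s) - cos s * d_coef (p s).

(* At θ = 0 this is 0 / 0 = 0 in Rocq, which is the right value. *)
Definition mean_source (p : R -> R) (th : R) : R := RInt (source p) 0 th / sin th.

Definition picard (p : R -> R) (x : R) : R := mean_source p (clamp x).

Definition admissible (p : R -> R) : Prop :=
  continuity p /\ forall th, 0 <= th <= delta -> Rabs (p th) <= 2 * th.

Lemma continuity_source p : continuity p -> continuity (source p).
Proof.
  intros Hp. unfold source. apply continuity_minus; apply continuity_mult.
  - exact continuity_sin.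
  - exact (continuity_comp p e_coef Hp continuity_e_coef).
  - exact continuity_cos.
  - exact (continuity_comp p d_coef Hp continuity_d_coef).
Qed.

Lemma sin_delta_bounds th : 0 < th <= delta -> th - th ^ 3 / 6 <= sin th /\ 0 < sin th.
Proof.
  intros H. unfold delta in H. pose proof (sin_ge_cubic th ltac:(lra)).
  split; [assumption | nra].
Qed.

Lemma admissible_small p s : admissible p -> 0 <= s <= delta -> Rabs (p s) <= / 50.
Proof. intros [_ H] Hs. specialize (H s Hs). unfold delta in *. lra. Qed.

Lemma source_nonlinear_bound p s : admissible p -> 0 <= s <= delta ->
  Rabs (sin s * (e_rat (p s) + 1)) + Rabs (cos s * d_rat (p s)) <= 56 * s ^ 3.
Proof.
  intros Hp Hs. pose proof (admissible_small p s Hp Hs) as Hsmall.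
  pose proof (proj2 Hp s Hs) as H2.
  pose proof (e_rat_near _ Hsmall). pose proof (d_rat_small _ Hsmall).
  pose proof (Rabs_sin_le s ltac:(lra)). pose proof (Rabs_cos_le_1 s).
  assert ((p s) ^ 2 <= 4 * s ^ 2) by (replace (4 * s ^ 2) with ((2 * s) ^ 2) by ring;
    apply pow2_le_of_Rabs_le; exact H2).
  assert (Rabs (p s) ^ 3 <= 8 * s ^ 3).
  { replace (8 * s ^ 3) with ((2 * s) ^ 3) by ring. apply pow_incr. split; [apply Rabs_pos | lra]. }
  rewrite !Rabs_mult.
  assert (Rabs (sin s) * Rabs (e_rat (p s) + 1) <= s * (4 * (4 * s ^ 2)))
    by (apply Rmult_le_compat; try apply Rabs_pos; lra).
  assert (Rabs (cos s) * Rabs (d_rat (p s)) <= 1 * (5 * (8 * s ^ 3)))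
    by (apply Rmult_le_compat; try apply Rabs_pos; lra).
  lra.
Qed.

Lemma source_near_neg_sin p s : admissible p -> 0 <= s <= delta ->
  Rabs (source p s + sin s) <= 56 * s ^ 3.
Proof.
  intros Hp Hs. pose proof (source_nonlinear_bound p s Hp Hs).
  unfold source. rewrite e_coef_small, d_coef_small by exact (admissible_small p s Hp Hs).
  replace (sin s * e_rat (p s) - cos s * d_rat (p s) + sin s)
    with (sin s * (e_rat (p s) + 1) + - (cos s * d_rat (p s))) by ring.
  eapply Rle_trans; [apply Rabs_triang|]. rewrite Rabs_Ropp. lra.
Qed.

Lemma source_lipschitz f g s : admissible f -> admissible g -> 0 <= s <= delta ->
  Rabs (source f s - source g s) <= (s / 5 + / 100) * Rabs (f s - g s).
Proof.
  intros Hf Hg Hs.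
  pose proof (admissible_small f s Hf Hs) as Hfs. pose proof (admissible_small g s Hg Hs) as Hgs.
  unfold source. rewrite !e_coef_small, !d_coef_small by assumption.
  replace (sin s * e_rat (f s) - cos s * d_rat (f s) - (sin s * e_rat (g s) - cos s * d_rat (g s)))
    with (sin s * (e_rat (f s) - e_rat (g s)) + - (cos s * (d_rat (f s) - d_rat (g s)))) by ring.
  eapply Rle_trans; [apply Rabs_triang|]. rewrite Rabs_Ropp, !Rabs_mult.
  pose proof (e_rat_lipschitz _ _ Hfs Hgs). pose proof (d_rat_lipschitz _ _ Hfs Hgs).
  pose proof (Rabs_sin_le s ltac:(lra)). pose proof (Rabs_cos_le_1 s).
  assert (Rabs (sin s) * Rabs (e_rat (f s) - e_rat (g s)) <= s * (/ 5 * Rabs (f s - g s)))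
    by (apply Rmult_le_compat; try apply Rabs_pos; lra).
  assert (Rabs (cos s) * Rabs (d_rat (f s) - d_rat (g s)) <= 1 * (/ 100 * Rabs (f s - g s)))
    by (apply Rmult_le_compat; try apply Rabs_pos; lra).
  lra.
Qed.

Lemma mean_source_0 p : mean_source p 0 = 0.
Proof. unfold mean_source. rewrite RInt_point. unfold zero; simpl. lra. Qed.

Lemma mean_source_bound p th : admissible p -> 0 <= th <= delta -> Rabs (mean_source p th) <= 2 * th.
Proof.
  intros Hp Hth. destruct (Req_dec th 0) as [->|H0]; [rewrite mean_source_0, Rabs_R0; lra|].
  destruct (sin_delta_bounds th ltac:(lra)) as [Hsin Hpos].
  unfold mean_source. apply Rabs_div_le; [exact Hpos|].
  apply Rle_trans with ((th - 0) * (th + 56 * th ^ 3)).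
  { apply abs_RInt_le_const; [lra | apply ex_RInt_continuity, continuity_source, Hp |].
    intros s Hs. pose proof (source_near_neg_sin p s Hp ltac:(lra)).
    pose proof (Rabs_sin_le s ltac:(lra)).
    assert (s ^ 3 <= th ^ 3) by (apply pow_incr; lra).
    replace (source p s) with ((source p s + sin s) + - sin s) by ring.
    eapply Rle_trans; [apply Rabs_triang|]. rewrite Rabs_Ropp. lra. }
  unfold delta in *. assert (th ^ 2 <= / 10000) by nra.
  apply Rle_trans with (2 * th * (th - th ^ 3 / 6)); [|apply Rmult_le_compat_l; lra].
  replace ((th - 0) * (th + 56 * th ^ 3)) with (th * th * (1 + 56 * th ^ 2)) by ring.
  replace (2 * th * (th - th ^ 3 / 6)) with (th * th * (2 - th ^ 2 / 3)) by field.
  apply Rmult_le_compat_l; nra.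
Qed.

Lemma continuity_pt_mean_source p x : continuity p -> 0 < x < PI ->
  continuity_pt (mean_source p) x.
Proof.
  intros Hp Hx. apply (continuity_pt_div (RInt (source p) 0) sin).
  - apply continuity_RInt, continuity_source, Hp.
  - apply continuity_sin.
  - apply Rgt_not_eq, sin_gt_0; lra.
Qed.

Lemma picard_admissible p : admissible p -> admissible (picard p).
Proof.
  intros Hp. split.
  - intros x. destruct (Rlt_dec 0 x) as [Hx|Hx].
    + unfold picard. apply (continuity_pt_comp clamp (mean_source p)); [apply continuity_clamp|].
      apply continuity_pt_mean_source; [apply Hp|]. pose proof PI2_3_2.
      unfold clamp, delta, Rmax, Rmin. repeat destruct Rle_dec; lra.
    + intros e He. exists (e / 2). split; [lra|]. intros y [_ Hy]. simpl in *. unfold R_dist in *.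
      unfold picard. replace (clamp x) with 0 by (unfold clamp, Rmax, Rmin; repeat destruct Rle_dec; lra).
      rewrite mean_source_0, Rminus_0_r.
      eapply Rle_lt_trans; [apply mean_source_bound; [exact Hp | apply clamp_range]|].
      assert (clamp y <= Rabs (y - x)) by
        (unfold clamp, delta, Rmax, Rmin; repeat destruct Rle_dec; split_Rabs; lra).
      lra.
  - intros th Hth. unfold picard. rewrite clamp_id by exact Hth. apply mean_source_bound; assumption.
Qed.

Lemma picard_contraction f g e : admissible f -> admissible g -> 0 <= e ->
  (forall th, 0 <= th <= delta -> Rabs (f th - g th) <= e) ->
  forall x, Rabs (picard f x - picard g x) <= e / 2.
Proof.
  intros Hf Hg He H x. unfold picard. pose proof (clamp_range x) as Hth.
  set (th := clamp x) in *.
  destruct (Req_dec th 0) as [->|H0]; [rewrite !mean_source_0, Rminus_0_r, Rabs_R0; lra|].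
  destruct (sin_delta_bounds th ltac:(lra)) as [Hsin Hpos].
  unfold mean_source.
  replace (RInt (source f) 0 th / sin th - RInt (source g) 0 th / sin th)
    with ((RInt (source f) 0 th - RInt (source g) 0 th) / sin th) by (field; lra).
  apply Rabs_div_le; [exact Hpos|].
  rewrite <- RInt_minus_continuity by (apply continuity_source; first [apply Hf | apply Hg]).
  apply Rle_trans with ((th - 0) * ((th / 5 + / 100) * e)).
  { apply abs_RInt_le_const; [lra | |].
    - apply ex_RInt_continuity, continuity_minus; apply continuity_source; [apply Hf | apply Hg].
    - intros s Hs. eapply Rle_trans; [apply source_lipschitz; auto; lra|].
      apply Rmult_le_compat; [lra | apply Rabs_pos | lra | apply H; lra]. }
  unfold delta in *. assert (0 < th) by lra.
  apply Rle_trans with (e / 2 * (th - th ^ 3 / 6)); [|apply Rmult_le_compat_l; lra].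
  replace ((th - 0) * ((th / 5 + / 100) * e)) with (th * e * (th / 5 + / 100)) by ring.
  replace (e / 2 * (th - th ^ 3 / 6)) with (th * e * (/ 2 - th ^ 2 / 12)) by field.
  apply Rmult_le_compat_l; nra.
Qed.

Fixpoint picard_iter (n : nat) : R -> R :=
  match n with O => fun _ => 0 | S n => picard (picard_iter n) end.

Lemma picard_iter_admissible n : admissible (picard_iter n).
Proof.
  induction n as [|n IH]; simpl; [|apply picard_admissible, IH].
  split; [apply continuity_const; intros u v; reflexivity|].
  intros th Hth. rewrite Rabs_R0. lra.
Qed.

Lemma picard_iter_step n x : Rabs (picard_iter (S n) x - picard_iter n x) <= / 50 * (/ 2) ^ n.
Proof.
  revert x. induction n as [|n IH]; intros x.
  - simpl. unfold picard. rewrite Rminus_0_r.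
    eapply Rle_trans; [apply mean_source_bound; [apply (picard_iter_admissible 0) | apply clamp_range]|].
    pose proof (clamp_range x). unfold delta in *. lra.
  - change (Rabs (picard (picard_iter (S n)) x - picard (picard_iter n) x) <= / 50 * (/ 2) ^ S n).
    replace (/ 50 * (/ 2) ^ S n) with (/ 50 * (/ 2) ^ n / 2) by (simpl; field).
    apply picard_contraction; try apply picard_iter_admissible; [|intros; apply IH].
    apply Rmult_le_pos; [lra | apply pow_le; lra].
Qed.

Definition slope (x : R) : R :=
  proj1_sig (geometric_limit (fun n => picard_iter n x) (/ 50) (fun n => picard_iter_step n x)).

Lemma slope_close n x : Rabs (slope x - picard_iter n x) <= / 25 * (/ 2) ^ n.
Proof.
  unfold slope. destruct geometric_limit as [l Hl]. simpl.
  replace (/ 25) with (2 * / 50) by field. apply Hl.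
Qed.

Lemma slope_admissible : admissible slope.
Proof.
  split.
  - intros x e He. destruct (pow_half_lt (e * 25 / 3)) as [N HN]; [lra|].
    specialize (HN N (le_n _)).
    destruct (proj1 (picard_iter_admissible N) x (e / 3)) as [a [Ha Hnear]]; [lra|].
    exists a. split; [exact Ha|]. intros y Hy. specialize (Hnear y Hy). simpl in *. unfold R_dist in *.
    pose proof (slope_close N x). pose proof (slope_close N y).
    replace (slope y - slope x)
      with ((slope y - picard_iter N y) + (picard_iter N y - picard_iter N x) + - (slope x - picard_iter N x))
      by ring.
    eapply Rle_lt_trans; [apply Rabs_triang|]. rewrite Rabs_Ropp.
    eapply Rle_lt_trans; [apply Rplus_le_compat_r, Rabs_triang|]. lra.
  - intros th Hth. apply Rle_of_le_plus_pow_half with (c := / 25); [lra|]. intros n.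
    pose proof (slope_close n th). pose proof (proj2 (picard_iter_admissible n) th Hth).
    replace (slope th) with ((slope th - picard_iter n th) + picard_iter n th) by ring.
    eapply Rle_trans; [apply Rabs_triang | lra].
Qed.

Lemma slope_fixed x : slope x = picard slope x.
Proof.
  symmetry. apply Rminus_diag_uniq, Rabs_le_0_eq.
  apply Rle_of_le_plus_pow_half with (c := / 25); [lra|]. intros n.
  assert (Rabs (picard slope x - picard_iter (S n) x) <= / 25 * (/ 2) ^ n / 2).
  { apply picard_contraction; [apply slope_admissible | apply picard_iter_admissible | |].
    - apply Rmult_le_pos; [lra | apply pow_le; lra].
    - intros; apply slope_close. }
  pose proof (slope_close (S n) x). simpl ((/ 2) ^ S n) in *.
  replace (picard slope x - slope x)
    with ((picard slope x - picard_iter (S n) x) + - (slope x - picard_iter (S n) x)) by ring.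
  eapply Rle_trans; [apply Rabs_triang|]. rewrite Rabs_Ropp. lra.
Qed.

Lemma slope_mean_source th : 0 <= th <= delta -> slope th = mean_source slope th.
Proof. intros H. rewrite slope_fixed. unfold picard. rewrite clamp_id by exact H. reflexivity. Qed.

Lemma slope_0 : slope 0 = 0.
Proof. rewrite slope_mean_source; [apply mean_source_0 | unfold delta; lra]. Qed.

Lemma slope_mul_sin th : 0 < th <= delta -> slope th * sin th = RInt (source slope) 0 th.
Proof.
  intros H. rewrite slope_mean_source by lra. unfold mean_source.
  destruct (sin_delta_bounds th H) as [_ Hs]. field. lra.
Qed.

Definition slope_rate (th : R) : R := (source slope th - cos th * slope th) / sin th.

Lemma is_derive_slope th : 0 < th < delta -> is_derive slope th (slope_rate th).
Proof.
  intros Hth. destruct (sin_delta_bounds th ltac:(lra)) as [_ Hs].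
  apply is_derive_ext_loc with (f := mean_source slope).
  - assert (Hm : 0 < Rmin th (delta - th)) by (apply Rmin_glb_lt; lra).
    exists (mkposreal _ Hm). intros t Ht. change (Rabs (t - th) < Rmin th (delta - th)) in Ht.
    pose proof (Rmin_l th (delta - th)). pose proof (Rmin_r th (delta - th)).
    destruct (Rabs_def2 _ _ Ht). symmetry. apply slope_mean_source. lra.
  - unfold mean_source.
    replace (slope_rate th) with ((source slope th * sin th - RInt (source slope) 0 th * cos th) / sin th ^ 2)
      by (rewrite <- slope_mul_sin by lra; unfold slope_rate; field; lra).
    apply is_derive_div; [| apply is_derive_sin | lra].
    apply is_derive_RInt_continuity, continuity_source, slope_admissible.
Qed.

Lemma slope_expansion th : 0 <= th <= delta -> Rabs (slope th + th / 2) <= 58 * th ^ 3.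
Proof.
  intros Hth. destruct (Req_dec th 0) as [->|H0].
  { rewrite slope_0. replace (0 + 0 / 2) with 0 by field. rewrite Rabs_R0. lra. }
  destruct (sin_delta_bounds th ltac:(lra)) as [Hsin Hpos].
  pose proof (Rabs_sin_le th ltac:(lra)). rewrite Rabs_right in H by lra.
  assert (Hint : Rabs (RInt (fun s => source slope s + sin s) 0 th) <= (th - 0) * (56 * th ^ 3)).
  { apply abs_RInt_le_const; [lra | |].
    - apply ex_RInt_continuity, continuity_plus; [apply continuity_source, slope_admissible | exact continuity_sin].
    - intros s Hs. eapply Rle_trans; [apply source_near_neg_sin; [apply slope_admissible | lra]|].
      assert (s ^ 3 <= th ^ 3) by (apply pow_incr; lra). lra. }
  rewrite RInt_plus_continuity, RInt_sin_0, <- slope_mul_sin in Hint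
    by first [lra | apply continuity_source, slope_admissible | exact continuity_sin].
  unfold delta in *.
  pose proof (cos_ge_quadratic th ltac:(lra)). pose proof (cos_le_quartic th ltac:(lra)).
  assert (Hcos : Rabs (cos th - 1 + th * sin th / 2) <= th ^ 4 / 12).
  { assert (th * (th - th ^ 3 / 6) <= th * sin th) by (apply Rmult_le_compat_l; lra).
    assert (th * sin th <= th * th) by (apply Rmult_le_compat_l; lra).
    split_Rabs; nra. }
  (* (slope θ + θ/2) sin θ = ∫ (source + sin) + (cos θ - 1 + θ sin θ / 2) is O(θ^4). *)
  assert (Hprod : Rabs ((slope th + th / 2) * sin th) <= (56 + / 12) * th ^ 4).
  { replace ((slope th + th / 2) * sin th)
      with (slope th * sin th + (1 - cos th) + (cos th - 1 + th * sin th / 2)) by field.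
    eapply Rle_trans; [apply Rabs_triang|]. lra. }
  rewrite Rabs_mult, (Rabs_right (sin th)) in Hprod by lra.
  assert (Ha : 0 <= Rabs (slope th + th / 2)) by apply Rabs_pos.
  assert (Rabs (slope th + th / 2) * (th - th ^ 3 / 6) <= (56 + / 12) * th ^ 4).
  { eapply Rle_trans; [|exact Hprod]. apply Rmult_le_compat_l; lra. }
  assert (th ^ 2 <= / 10000) by nra. assert (0 < th ^ 4) by (apply pow_lt; lra).
  apply Rnot_lt_le. intros Hc.
  assert (58 * th ^ 3 * (th - th ^ 3 / 6) < Rabs (slope th + th / 2) * (th - th ^ 3 / 6))
    by (apply Rmult_lt_compat_r; nra).
  assert (58 * th ^ 3 * (th - th ^ 3 / 6) = th ^ 4 * (58 - 58 * th ^ 2 / 6)) by field.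
  nra.
Qed.

Lemma slope_rate_expansion th : 0 < th < delta -> Rabs (slope_rate th + / 2) <= 120 * th ^ 2.
Proof.
  intros Hth. assert (Hs : 0 <= th <= delta) by lra.
  destruct (sin_delta_bounds th ltac:(lra)) as [Hsin Hpos].
  pose proof (source_nonlinear_bound slope th slope_admissible Hs) as Hnl.
  pose proof (slope_expansion th Hs) as Hexp. pose proof (Rabs_cos_le_1 th).
  unfold delta in *.
  pose proof (cos_ge_quadratic th ltac:(lra)). pose proof (cos_le_quartic th ltac:(lra)).
  assert (th ^ 2 <= / 10000) by nra. assert (0 < th ^ 3) by (apply pow_lt; lra).
  assert (Hcos : Rabs (th * cos th - sin th) <= th ^ 3 / 2).
  {
    assert (th * (1 - th ^ 2 / 2) <= th * cos th) by (apply Rmult_le_compat_l; lra).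
    assert (th * cos th <= th * (1 - th ^ 2 / 2 + th ^ 4 / 24)) by (apply Rmult_le_compat_l; lra).
    assert (th ^ 5 <= th ^ 3) by (replace (th ^ 5) with (th ^ 3 * th ^ 2) by ring; nra).
    pose proof (Rabs_sin_le th ltac:(lra)). split_Rabs; nra. }
  assert (Hnum : Rabs (source slope th - cos th * slope th + sin th / 2) <= (56 + 58 + / 4) * th ^ 3).
  { unfold source. rewrite e_coef_small, d_coef_small by exact (admissible_small _ _ slope_admissible Hs).
    replace (sin th * e_rat (slope th) - cos th * d_rat (slope th) - cos th * slope th + sin th / 2)
      with (sin th * (e_rat (slope th) + 1) + - (cos th * d_rat (slope th))
            + - (cos th * (slope th + th / 2)) + (th * cos th - sin th) / 2) by field.
    assert (Rabs (cos th) * Rabs (slope th + th / 2) <= 1 * (58 * th ^ 3))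
      by (apply Rmult_le_compat; try apply Rabs_pos; lra).
    eapply Rle_trans; [apply Rabs_triang|].
    eapply Rle_trans; [apply Rplus_le_compat_r, Rabs_triang|].
    eapply Rle_trans; [apply Rplus_le_compat_r, Rplus_le_compat_r, Rabs_triang|].
    rewrite !Rabs_Ropp, (Rabs_mult (cos th) (slope th + th / 2)), Rabs_div, (Rabs_right 2) by lra.
    lra. }
  replace (slope_rate th + / 2) with ((source slope th - cos th * slope th + sin th / 2) / sin th)
    by (unfold slope_rate; field; lra).
  apply Rabs_div_le; [exact Hpos|].
  apply Rle_trans with (120 * th ^ 2 * (th - th ^ 3 / 6)); [|apply Rmult_le_compat_l; nra].
  replace (120 * th ^ 2 * (th - th ^ 3 / 6)) with (th ^ 3 * (120 - 20 * th ^ 2)) by field.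
  nra.
Qed.

Lemma slope_rate_neg th : 0 < th < delta -> slope_rate th < 0.
Proof.
  intros H. pose proof (slope_rate_expansion th H). unfold delta in H.
  assert (th ^ 2 <= / 10000) by nra. split_Rabs; lra.
Qed.

Lemma continuity_pt_slope_rate th : 0 < th < delta -> continuity_pt slope_rate th.
Proof.
  intros H. destruct (sin_delta_bounds th ltac:(lra)) as [_ Hs]. unfold slope_rate.
  apply (continuity_pt_div (fun t => source slope t - cos t * slope t) sin); [| apply continuity_sin | lra].
  apply continuity_minus; [apply continuity_source, slope_admissible|].
  apply continuity_mult; [exact continuity_cos | apply slope_admissible].
Qed.

Lemma slope_decreasing a b : 0 <= a -> a < b -> b < delta -> slope b < slope a.
Proof.
  intros Ha Hab Hb. apply (strict_decreasing_of_deriv_neg slope slope_rate); [exact Hab | | |].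
  - intros x Hx. apply is_derive_slope. lra.
  - intros x Hx. apply slope_rate_neg. lra.
  - intros x _. apply slope_admissible.
Qed.

Lemma slope_ode : ode_on delta slope.
Proof.
  intros t Ht. pose proof (is_derive_slope t Ht) as Hd.
  destruct (sin_delta_bounds t ltac:(lra)) as [_ Hs].
  pose proof (admissible_small slope t slope_admissible ltac:(lra)) as Hp.
  assert (Hp2 : slope t ^ 2 <= / 2500) by (apply pow2_le_of_Rabs_le in Hp; lra).
  assert (Hex : ex_derive slope t) by (exists (slope_rate t); exact Hd).
  apply is_derive_unique in Hd.
  auto_derive; [repeat split; try exact Hex; nra |].
  change (Derive (fun x => slope x) t) with (Derive slope t). rewrite Hd.
  unfold slope_rate, source. rewrite e_coef_small, d_coef_small by exact Hp. unfold e_rat, d_rat.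
  field. repeat split; nra.
Qed.

Definition solution (u0 th : R) : R := u0 + RInt slope 0 th.

Definition slope_deriv (th : R) : R := if Rle_dec th 0 then - / 2 else slope_rate th.

Lemma solution_0 u0 : solution u0 0 = u0.
Proof. unfold solution. rewrite RInt_point. unfold zero; simpl. ring. Qed.

Lemma is_derive_solution u0 x : is_derive (solution u0) x (slope x).
Proof.
  pose proof (is_derive_RInt_continuity slope 0 x (proj1 slope_admissible)) as H.
  apply is_derive_Reals in H. apply is_derive_Reals. unfold solution.
  replace (slope x) with (0 + slope x) by ring.
  apply (derivable_pt_lim_plus (fun _ => u0) (RInt slope 0)); [apply derivable_pt_lim_const | exact H].
Qed.

Lemma solution_has_deriv u0 : has_deriv_on_Ico delta (solution u0) slope.
Proof.
  intros x _. apply is_derive_difference_quotient; [apply is_derive_solution|].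
  intros h [Hh _]. exact Hh.
Qed.

Lemma slope_has_deriv : has_deriv_on_Ico delta slope slope_deriv.
Proof.
  intros x Hx. destruct (Req_dec x 0) as [->|Hx0].
  - unfold slope_deriv. destruct (Rle_dec 0 0) as [_|]; [|lra].
    apply filterlim_within_locally_R. intros eps He. exists eps. split; [exact He|].
    intros h [Hh0 Hh] Hhe. rewrite Rplus_0_l in *. rewrite slope_0, Rminus_0_r.
    rewrite Rminus_0_r, Rabs_right in Hhe by lra.
    pose proof (slope_expansion h ltac:(lra)).
    replace (slope h / h - - / 2) with ((slope h + h / 2) / h) by (field; lra).
    unfold delta in *.
    apply Rle_lt_trans with (58 * h ^ 2); [apply Rabs_div_le; [lra | nra]|].
    replace (58 * h ^ 2) with (h * (58 * h)) by ring. nra.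
  - replace (slope_deriv x) with (slope_rate x)
      by (unfold slope_deriv; destruct (Rle_dec x 0); [lra | reflexivity]).
    apply is_derive_difference_quotient; [apply is_derive_slope; lra|].
    intros h [Hh _]. exact Hh.
Qed.

Lemma slope_deriv_continuous : continuous_on_Ico delta slope_deriv.
Proof.
  intros x Hx. apply filterlim_within_locally_R. intros eps He. unfold slope_deriv.
  destruct (Req_dec x 0) as [->|Hx0].
  - exists (eps / 240). split; [lra|]. intros y [Hy1 Hy2] Hy.
    destruct (Rle_dec 0 0) as [_|]; [|lra].
    destruct (Rle_dec y 0); [rewrite Rminus_diag, Rabs_R0; exact He|].
    pose proof (slope_rate_expansion y ltac:(lra)).
    rewrite Rminus_0_r, Rabs_right in Hy by lra.
    replace (slope_rate y - - / 2) with (slope_rate y + / 2) by ring. unfold delta in *.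
    assert (120 * y ^ 2 < eps) by (replace (120 * y ^ 2) with (y * (120 * y)) by ring; nra).
    lra.
  - destruct (continuity_pt_slope_rate x ltac:(lra) eps He) as [a [Ha Hc]].
    exists (Rmin a x). split; [apply Rmin_glb_lt; lra|].
    intros y [Hy1 Hy2] Hy. pose proof (Rmin_l a x). pose proof (Rmin_r a x).
    destruct (Rle_dec x 0); [lra|].
    destruct (Rle_dec y 0) as [Hy0|Hy0]; [destruct (Rabs_def2 _ _ Hy); lra|].
    destruct (Req_dec y x) as [->|Hyx]; [rewrite Rminus_diag, Rabs_R0; exact He|].
    apply Hc. split; [split; [exact I | auto] | simpl; unfold R_dist; lra].
Qed.

Lemma solution_strict_concave u0 x y t : 0 <= x < delta -> 0 <= y < delta -> x <> y -> 0 < t < 1 ->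
  t * solution u0 x + (1 - t) * solution u0 y < solution u0 (t * x + (1 - t) * y).
Proof.
  apply strict_concave_of_deriv_decreasing with (f' := slope).
  - intros z _. apply is_derive_solution.
  - exact slope_decreasing.
Qed.

Lemma solution_expansion u0 th : 0 <= th <= delta ->
  Rabs (solution u0 th - (u0 - th ^ 2 / 4)) <= 58 * th ^ 4.
Proof.
  intros Hth.
  assert (Hhalf : continuity (fun s => s / 2)).
  { apply (continuity_lipschitz _ (/ 2)); [lra|]. intros x y.
    replace (x / 2 - y / 2) with (/ 2 * (x - y)) by field. rewrite Rabs_mult, Rabs_right; lra. }
  assert (Hquad : RInt (fun s => s / 2) 0 th = th ^ 2 / 4).
  { rewrite (RInt_antiderivative (fun s => s ^ 2 / 4)); [lra | | exact Hhalf].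
    intros x. auto_derive; [exact I | field]. }
  replace (solution u0 th - (u0 - th ^ 2 / 4)) with (RInt (fun s => slope s + s / 2) 0 th)
    by (rewrite RInt_plus_continuity, Hquad by first [exact Hhalf | apply slope_admissible];
        unfold solution; lra).
  replace (58 * th ^ 4) with ((th - 0) * (58 * th ^ 3)) by ring.
  apply abs_RInt_le_const; [lra | |].
  - apply ex_RInt_continuity, continuity_plus; [apply slope_admissible | exact Hhalf].
  - intros s Hs. eapply Rle_trans; [apply slope_expansion; lra|].
    assert (s ^ 3 <= th ^ 3) by (apply pow_incr; lra). lra.
Qed.

(** * Uniqueness *)

Definition hflux (y : R) : R := y / (1 + y ^ 2) ^ 2.
Definition kflux (y : R) : R := (y ^ 2 - 1) / (1 + y ^ 2) ^ 2.

Lemma hflux_inverse_lipschitz a b : Rabs a <= 3 / 10 -> Rabs b <= 3 / 10 ->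
  Rabs (a - b) <= 2 * Rabs (hflux a - hflux b).
Proof.
  intros Ha Hb. pose proof (pow2_le_of_Rabs_le _ _ Ha). pose proof (pow2_le_of_Rabs_le _ _ Hb).
  assert (Hab : a * b <= 9 / 100 /\ - (9 / 100) <= a * b) by (split_Rabs; nra).
  assert (0 <= a ^ 2 * b ^ 2 <= 81 / 10000)
    by (replace (a ^ 2 * b ^ 2) with ((a * b) * (a * b)) by ring; nra).
  set (N := 1 - 2 * a * b - a * b * (a ^ 2 + a * b + b ^ 2)).
  set (den := (1 + a ^ 2) ^ 2 * (1 + b ^ 2) ^ 2).
  assert (Hden1 : 1 <= den) by (unfold den; nra).
  assert (Hden2 : den <= (1 + 9 / 100) ^ 4).
  { unfold den. replace ((1 + 9 / 100) ^ 4) with ((1 + 9 / 100) ^ 2 * (1 + 9 / 100) ^ 2) by ring.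
    apply Rmult_le_compat; nra. }
  assert (HN : 79 / 100 <= N).
  { unfold N. assert (0 <= a ^ 2 + a * b + b ^ 2 <= 27 / 100) by nra.
    assert (Rabs (a * b * (a ^ 2 + a * b + b ^ 2)) <= 9 / 100 * (27 / 100)).
    { rewrite Rabs_mult, (Rabs_right (a ^ 2 + a * b + b ^ 2)) by lra.
      apply Rmult_le_compat; [apply Rabs_pos | lra | split_Rabs; lra | lra]. }
    split_Rabs; nra. }
  replace (hflux a - hflux b) with ((a - b) * (N / den)) by (unfold hflux, N, den; field; nra).
  rewrite Rabs_mult, (Rabs_right (N / den)) by (apply Rle_ge, Rdiv_le_0_compat; lra).
  assert (/ 2 <= N / den) by (apply Rle_div_r; nra).
  pose proof (Rabs_pos (a - b)). nra.
Qed.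

Lemma kflux_lipschitz a b : Rabs a <= 3 / 10 -> Rabs b <= 3 / 10 ->
  Rabs (kflux a - kflux b) <= 2 * Rabs (a - b).
Proof.
  intros Ha Hb. pose proof (pow2_le_of_Rabs_le _ _ Ha). pose proof (pow2_le_of_Rabs_le _ _ Hb).
  set (den := (1 + a ^ 2) ^ 2 * (1 + b ^ 2) ^ 2).
  assert (Hden1 : 1 <= den) by (unfold den; nra).
  replace (kflux a - kflux b) with ((a - b) * ((a + b) * (3 + a ^ 2 + b ^ 2 - a ^ 2 * b ^ 2) / den))
    by (unfold kflux, den; field; nra).
  rewrite Rabs_mult, Rmult_comm. apply Rmult_le_compat_r; [apply Rabs_pos|].
  apply Rabs_div_le; [lra|]. rewrite Rabs_mult.
  assert (Rabs (a + b) <= 6 / 10) by (split_Rabs; lra).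
  assert (0 <= a ^ 2 * b ^ 2) by nra.
  rewrite (Rabs_right (3 + a ^ 2 + b ^ 2 - a ^ 2 * b ^ 2)) by nra.
  pose proof (Rabs_pos (a + b)). nra.
Qed.

Lemma Rabs_hflux_le y : Rabs (hflux y) <= Rabs y.
Proof.
  unfold hflux. apply Rabs_div_le; [nra|]. pose proof (Rabs_pos y).
  assert (1 <= (1 + y ^ 2) ^ 2) by nra. nra.
Qed.

(* The ODE says (sin θ hflux u')' = sin θ kflux u'; on the set where |u'| <= 3/10,
   hflux is bi-Lipschitz, so the difference of two such fluxes obeys a Gronwall bound. *)
Lemma slope_unique_small v1 T : T <= delta -> ode_on delta v1 ->
  (forall s, 0 <= s < T -> Rabs (v1 s) <= 3 / 10) -> forall s, 0 < s < T -> v1 s = slope s.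
Proof.
  intros HT Hode Hv1.
  assert (Hsl : forall s, 0 <= s <= delta -> Rabs (slope s) <= 3 / 10).
  { intros s Hs. pose proof (admissible_small slope s slope_admissible Hs). lra. }
  set (w := fun s => sin s * v1 s / (1 + v1 s ^ 2) ^ 2 - sin s * slope s / (1 + slope s ^ 2) ^ 2).
  assert (Hw : forall s, w s = sin s * (hflux (v1 s) - hflux (slope s)))
    by (intros s; unfold w, hflux; field; split; nra).
  assert (Hzero : forall s, 0 < s < T -> w s = 0).
  { apply (gronwall_zero w (fun s => sin s * (kflux (v1 s) - kflux (slope s))) T 4 (6 / 10)); [lra | | |].
    - intros s Hs. unfold w.
      replace (sin s * (kflux (v1 s) - kflux (slope s)))
        with (sin s * (v1 s ^ 2 - 1) / (1 + v1 s ^ 2) ^ 2 - sin s * (slope s ^ 2 - 1) / (1 + slope s ^ 2) ^ 2)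
        by (unfold kflux; field; split; nra).
      apply (is_derive_minus (fun s => sin s * v1 s / (1 + v1 s ^ 2) ^ 2)
                             (fun s => sin s * slope s / (1 + slope s ^ 2) ^ 2));
        [apply Hode | apply slope_ode]; lra.
    - intros s Hs. rewrite Hw, !Rabs_mult.
      destruct (sin_delta_bounds s ltac:(lra)) as [_ Hsin]. rewrite Rabs_right by lra.
      pose proof (kflux_lipschitz _ _ (Hv1 s ltac:(lra)) (Hsl s ltac:(lra))).
      pose proof (hflux_inverse_lipschitz _ _ (Hv1 s ltac:(lra)) (Hsl s ltac:(lra))).
      apply Rmult_le_compat_l with (r := sin s) in H; [|lra].
      apply Rmult_le_compat_l with (r := sin s) in H0; [|lra]. nra.
    - intros s Hs. rewrite Hw, Rabs_mult.
      pose proof (Rabs_sin_le s ltac:(lra)).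
      pose proof (Rabs_hflux_le (v1 s)). pose proof (Rabs_hflux_le (slope s)).
      pose proof (Hv1 s ltac:(lra)). pose proof (Hsl s ltac:(lra)).
      assert (Rabs (hflux (v1 s) - hflux (slope s)) <= 6 / 10).
      { unfold Rminus. eapply Rle_trans; [apply Rabs_triang|]. rewrite Rabs_Ropp. lra. }
      rewrite Rmult_comm. apply Rmult_le_compat; try apply Rabs_pos; lra. }
  intros s Hs. specialize (Hzero s Hs). rewrite Hw in Hzero.
  destruct (sin_delta_bounds s ltac:(lra)) as [_ Hsin].
  apply Rmult_integral in Hzero. destruct Hzero as [|Hh]; [lra|].
  pose proof (hflux_inverse_lipschitz _ _ (Hv1 s ltac:(lra)) (Hsl s ltac:(lra))).
  rewrite Hh, Rabs_R0 in H. apply Rminus_diag_uniq, Rabs_le_0_eq. lra.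
Qed.

Lemma slope_unique v1 v2 : has_deriv_on_Ico delta v1 v2 -> v1 0 = 0 -> ode_on delta v1 ->
  forall x, 0 <= x < delta -> v1 x = slope x.
Proof.
  intros Hd H0 Hode x Hx.
  apply (continuation_eq delta v1 slope (3 / 10) x).
  - exact (has_deriv_on_Ico_continuous _ _ _ Hd).
  - apply continuity_continuous_on_Ico, slope_admissible.
  - exact Hx.
  - rewrite H0, slope_0. reflexivity.
  - intros t Ht. pose proof (admissible_small slope t slope_admissible ltac:(lra)). lra.
  - intros T HTx. apply slope_unique_small; [lra | exact Hode].
Qed.

Lemma solution_unique u0 v : is_solution u0 delta v -> forall x, 0 <= x < delta -> v x = solution u0 x.
Proof.
  intros [v1 [v2 [[Hv [Hv1 _]] [Hv0 [Hv10 Hode]]]]].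
  assert (Hdiff : has_deriv_on_Ico delta (fun t => v t - solution u0 t) (fun t => v1 t - slope t))
    by exact (has_deriv_on_Ico_minus _ _ _ _ _ Hv (solution_has_deriv u0)).
  intros x Hx.
  pose proof (has_deriv_on_Ico_zero_const delta _ _ ltac:(unfold delta; lra) Hdiff) as Hconst.
  assert (v x - solution u0 x = v 0 - solution u0 0); [|rewrite solution_0 in *; lra].
  apply Hconst; [|exact Hx]. intros t Ht. rewrite (slope_unique v1 v2 Hv1 Hv10 Hode t Ht). ring.
Qed.

Theorem theorem3p8 :
  forall u0 : R,
  exists d : R, 0 < d /\
  exists u u1 u2 : R -> R,
    C2_Ico d u u1 u2 /\ u 0 = u0 /\ u1 0 = 0 /\ ode_on d u1 /\
    (forall v : R -> R, is_solution u0 d v ->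
       forall x, 0 <= x < d -> v x = u x) /\
    u2 0 = - / 2 /\
    (forall x y t, 0 <= x < d -> 0 <= y < d -> x <> y -> 0 < t < 1 ->
       t * u x + (1 - t) * u y < u (t * x + (1 - t) * y)) /\
    (exists C eps : R, 0 < eps /\
       forall th, 0 <= th < d -> th < eps ->
         Rabs (u th - (u0 - th ^ 2 / 4)) <= C * th ^ 4).
Proof.
  intros u0. exists delta. split; [unfold delta; lra|].
  exists (solution u0), slope, slope_deriv.
  split; [split; [|split]|]; [apply solution_has_deriv | apply slope_has_deriv | apply slope_deriv_continuous |].
  split; [apply solution_0|].
  split; [apply slope_0|].
  split; [apply slope_ode|].
  split; [apply solution_unique|].
  split; [unfold slope_deriv; destruct (Rle_dec 0 0); [reflexivity | lra]|].
  split; [apply solution_strict_concave|].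
  exists 58, 1. split; [lra|]. intros th Hth _. apply solution_expansion. lra.
Qed.
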